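(* Let $\mathcal U$ be a finite set with $|\mathcal U|=n$, let $V'\subseteq\mathbb{R}^{\mathcal U}$ be a linear subspace, and let $f_0\in\mathbb{R}^{\mathcal U}$ be nonzero with support $S=\{u:f_0(u)\neq0\}$ satisfying $|S|\le\mu n$ for some $\mu>0$. Let $V=\mathrm{span}(V'\cup\{f_0\})$ and let $f\in\mathbb{R}^{\mathcal U}$ be nonzero. Suppose there are $\alpha>0$, $\epsilon\in[0,1)$ and $\eta\ge0$ such that: (i) $\|f'\|_2\le\alpha\|f'\|_1$ for all $f'\in V'$; (ii) $\langle f_0,f\rangle\ge(1-\epsilon)\|f_0\|_2\|f\|_2$; (iii) $\langle f',f\rangle\le\eta\|f'\|_2\|f\|_2$ for all $f'\in V'$; (iv) $\dfrac{\eta}{1-\epsilon}<\dfrac{1}{\alpha\sqrt{\mu}}-2$. Then $f_0/\langle f_0,f\rangle$ is the unique optimal solution of the linear program $\min\{\|y\|_1: y\in V,\ \langle y,f\rangle=1\}$.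
   Context: All norms and inner products use the uniform (expectation) measure on $\mathcal U$: $\langle g,h\rangle=\mathbb{E}_{u\in\mathcal U}g(u)h(u)$, $\|g\|_p=(\mathbb{E}_{u\in\mathcal U}|g(u)|^p)^{1/p}$. *)

(* Functions U -> R are finite functions {ffun U -> R^o},
   which form a finite-dimensional R-vector space; subspaces are {vspace _}. *)
From HB Require Import structures.
From mathcomp Require Import all_boot all_order all_algebra.
Set Implicit Arguments. Unset Strict Implicit. Unset Printing Implicit Defensive.
Import Order.TTheory GRing.Theory Num.Theory.
Local Open Scope ring_scope.

Notation fspace U R := {ffun U -> R^o}.

Definition mean (R : numFieldType) (U : finType) (g : U -> R) : R :=
  (#|U|%:R)^-1 * \sum_(u : U) g u.

Definition inner (R : numFieldType) (U : finType) (g h : fspace U R) : R :=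
  mean (fun u => g u * h u).

Definition norm1 (R : numFieldType) (U : finType) (g : fspace U R) : R :=
  mean (fun u => `|g u|).

Definition norm2 (R : rcfType) (U : finType) (g : fspace U R) : R :=
  Num.sqrt (mean (fun u => g u ^+ 2)).

Definition supp (R : numFieldType) (U : finType) (g : fspace U R) : {set U} :=
  [set u | g u != 0].

Definition unique_LP_optimum (R : rcfType) (U : finType)
    (V : {vspace fspace U R}) (f y0 : fspace U R) : Prop :=
  [/\ y0 \in V, inner y0 f = 1 &
      forall y, y \in V -> inner y f = 1 -> y != y0 -> norm1 y0 < norm1 y].

From HB Require Import structures.
From mathcomp Require Import all_boot all_order all_algebra.
From mathcomp Require Import ring lra.

(* Every feasible y of the linear program is y = f' + t f0 with f' in V'.
   The proof compares ||y||_1 with ||f0||_1 / <f0,f> in three estimates: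
   - on the support S of f0 the perturbation f' can cancel at most its own
     mass there, which by Cauchy--Schwarz against the indicator of S is at
     most sqrt(mu) ||f'||_2 <= alpha sqrt(mu) ||f'||_1 (hypothesis (i)), so
     ||y||_1 >= |t| ||f0||_1 + (1 - 2 alpha sqrt(mu)) ||f'||_1;
   - the constraint <y,f> = 1 and (iii) force
     |t| <f0,f> >= 1 - eta alpha ||f'||_1 ||f||_2;
   - (ii) and the same Cauchy--Schwarz bound give
     (1 - eps) ||f||_2 ||f0||_1 <= sqrt(mu) <f0,f>.
   Hypothesis (iv) is exactly what makes these add up to a strict gain as
   soon as f' <> 0.  The file first develops the expectation calculus
   (linearity, positivity, Cauchy--Schwarz), then the l1-mass of a function
   on a set, then the numerical bookkeeping, and finally the theorem. *)

Set Implicit Arguments.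
Unset Strict Implicit.
Unset Printing Implicit Defensive.

Import Order.TTheory GRing.Theory Num.Theory.
Local Open Scope ring_scope.

Section Expectation.
Variables (R : rcfType) (U : finType).

Lemma eq_mean (g h : U -> R) : g =1 h -> mean g = mean h.
Proof. by move=> e; rewrite /mean; congr (_ * _); apply: eq_bigr => u _. Qed.

Lemma meanD (g h : U -> R) : mean (fun u => g u + h u) = mean g + mean h.
Proof. by rewrite /mean big_split mulrDr. Qed.

Lemma meanZ (c : R) (g : U -> R) : mean (fun u => c * g u) = c * mean g.
Proof. by rewrite /mean -mulr_sumr mulrCA. Qed.

Lemma ler_mean (g h : U -> R) : (forall u, g u <= h u) -> mean g <= mean h.
Proof.
move=> le; rewrite /mean ler_wpM2l ?invr_ge0 ?ler0n //.
by apply: ler_sum => u _.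
Qed.

Lemma mean_ge0 (g : U -> R) : (forall u, 0 <= g u) -> 0 <= mean g.
Proof.
move=> ge0; rewrite /mean mulr_ge0 ?invr_ge0 ?ler0n //.
by apply: sumr_ge0 => u _.
Qed.

Lemma mean_gt0 (g : U -> R) (u0 : U) :
  (forall u, 0 <= g u) -> 0 < g u0 -> 0 < mean g.
Proof.
move=> ge0 gt0; rewrite /mean mulr_gt0 //.
  by rewrite invr_gt0 ltr0n; apply/card_gt0P; exists u0.
rewrite (bigD1 u0) //=; apply: ltr_wpDr => //.
by apply: sumr_ge0 => u _.
Qed.

(* The quadratic t |-> mean ((t g - h)^2) is nonnegative. *)
Lemma mean_quadratic_ge0 (g h : U -> R) (t : R) :
  2 * t * mean (fun u => g u * h u) <=
  t ^+ 2 * mean (fun u => g u ^+ 2) + mean (fun u => h u ^+ 2).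
Proof.
rewrite -subr_ge0.
have -> : t ^+ 2 * mean (fun u => g u ^+ 2) + mean (fun u => h u ^+ 2)
    - 2 * t * mean (fun u => g u * h u) = mean (fun u => (t * g u - h u) ^+ 2).
  rewrite (@eq_mean (fun u => (t * g u - h u) ^+ 2)
    (fun u => t ^+ 2 * g u ^+ 2 + (h u ^+ 2 + (- (2 * t)) * (g u * h u))));
    last by move=> u; ring.
  by rewrite !meanD !meanZ; ring.
by apply: mean_ge0 => u; apply: sqr_ge0.
Qed.

Lemma mean_CauchySchwarz (g h : U -> R) :
  mean (fun u => g u * h u) <=
  Num.sqrt (mean (fun u => g u ^+ 2)) * Num.sqrt (mean (fun u => h u ^+ 2)).
Proof.
set C := mean _; set A := mean (fun u => g u ^+ 2); set B := mean _.
have A0 : 0 <= A by apply: mean_ge0 => u; apply: sqr_ge0.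
have B0 : 0 <= B by apply: mean_ge0 => u; apply: sqr_ge0.
have [C_le0|C_gt0] := lerP C 0.
  by apply: le_trans C_le0 _; rewrite mulr_ge0 ?sqrtr_ge0.
rewrite -sqrtrM // -(ger0_norm (ltW C_gt0)) -sqrtr_sqr ler_sqrt; last first.
  exact: mulr_ge0.
have [A_eq0|A_neq0] := eqVneq A 0.
  (* then 2 t C <= B for every t, impossible for C > 0 *)
  have := mean_quadratic_ge0 g h ((B + 1) / (2 * C)).
  rewrite -/A -/B -/C A_eq0 mulr0 add0r.
  have -> : 2 * ((B + 1) / (2 * C)) * C = B + 1 by field; rewrite gt_eqF.
  lra.
have A_gt0 : 0 < A by rewrite lt_def A_neq0.
have := mean_quadratic_ge0 g h (C / A); rewrite -/A -/B -/C.
have -> : 2 * (C / A) * C = 2 * (C ^+ 2 / A) by field.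
have -> : (C / A) ^+ 2 * A = C ^+ 2 / A by field.
move=> quad; have : C ^+ 2 / A <= B by lra.
by rewrite ler_pdivrMr // mulrC.
Qed.

Implicit Types (f g h : fspace U R) (S : {set U}).

Lemma innerZl t g f : inner (t *: g) f = t * inner g f.
Proof. by rewrite /inner -meanZ; apply: eq_mean => u; rewrite ffunE mulrA. Qed.

Lemma inner0l f : inner 0 f = 0.
Proof. by rewrite -(scale0r (0 : fspace U R)) innerZl mul0r. Qed.

Lemma innerDl g h f : inner (g + h) f = inner g f + inner h f.
Proof. by rewrite /inner -meanD; apply: eq_mean => u; rewrite ffunE mulrDl. Qed.

Lemma norm1Z t g : norm1 (t *: g) = `|t| * norm1 g.
Proof. by rewrite /norm1 -meanZ; apply: eq_mean => u; rewrite ffunE normrM. Qed.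

Lemma norm1_ge0 g : 0 <= norm1 g.
Proof. by apply: mean_ge0. Qed.

Lemma ffun_neq0P g : g != 0 -> exists u, g u != 0.
Proof.
move=> g_neq0; apply/existsP; apply: contraNT g_neq0.
rewrite negb_exists => /forallP g0; apply/eqP/ffunP => u.
by rewrite ffunE; apply/eqP; rewrite -[_ == _]negbK g0.
Qed.

Lemma norm1_gt0 g : g != 0 -> 0 < norm1 g.
Proof.
move=> /ffun_neq0P [u gu]; rewrite /norm1; apply: (@mean_gt0 _ u) => //.
by rewrite normr_gt0.
Qed.

Lemma norm2_gt0 g : g != 0 -> 0 < norm2 g.
Proof.
move=> /ffun_neq0P [u gu]; rewrite /norm2 sqrtr_gt0.
apply: (@mean_gt0 _ u) => [v|]; first exact: sqr_ge0.
by rewrite exprn_even_gt0.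
Qed.

Definition norm1_on S g : R := mean (fun u => `|g u| * (u \in S)%:R).

Lemma norm1_on_supp g : norm1 g = norm1_on (supp g) g.
Proof.
apply: eq_mean => u; rewrite inE.
by have [->|] := eqVneq (g u) 0; rewrite ?normr0 ?mul0r ?mulr1.
Qed.

Lemma mean_indicator S : mean (fun u => (u \in S)%:R) = #|S|%:R / #|U|%:R :> R.
Proof.
rewrite /mean mulrC -sum1_card natr_sum; congr (_ / _).
by rewrite [RHS]big_mkcond; apply: eq_bigr => u _; case: (u \in S).
Qed.

(* On a set of density at most mu, the l1-mass is controlled by the l2-norm:
   this is Cauchy--Schwarz against the indicator of S. *)
Lemma norm1_on_le S g (mu : R) : 0 <= mu -> (#|S|%:R : R) <= mu * #|U|%:R ->
  norm1_on S g <= Num.sqrt mu * norm2 g.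
Proof.
move=> mu_ge0 S_small; apply: le_trans (mean_CauchySchwarz _ _) _.
rewrite mulrC /norm2; apply: ler_pM; rewrite ?sqrtr_ge0 //.
- rewrite ler_sqrt // (@eq_mean _ (fun u => (u \in S)%:R)); last first.
    by move=> u; case: (u \in S); rewrite ?expr0n ?expr1n.
  rewrite mean_indicator; have [->|U_gt0] := posnP #|U|.
    by rewrite invr0 mulr0.
  by rewrite ler_pdivrMr ?ltr0n.
- rewrite ler_sqrt; last by apply: mean_ge0 => u; apply: sqr_ge0.
  by apply: ler_mean => u; rewrite real_normK ?num_real.
Qed.

(* Adding g to a multiple of h costs at least |t| ||h||_1 + ||g||_1, minus
   twice the mass of g on the support of h, where cancellations may occur. *)
Lemma norm1_perturb g h (t : R) :
  `|t| * norm1 h + norm1 g - 2 * norm1_on (supp h) g <= norm1 (g + t *: h).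
Proof.
rewrite /norm1_on -mulNr -!meanZ -!meanD; apply: ler_mean => u.
have -> : (g + t *: h) u = g u + t * h u by rewrite !ffunE.
rewrite inE; have [->|_] /= := eqVneq (h u) 0.
  by rewrite normr0 !mulr0 !addr0 add0r.
have := lerB_normD (t * h u) (g u); rewrite normrM [g u + _]addrC; lra.
Qed.

End Expectation.

Lemma condition_iv_rescaled (R : realFieldType) (alpha s eps eta : R) :
  0 < alpha -> 0 < s -> eps < 1 ->
  eta / (1 - eps) < (alpha * s)^-1 - 2 ->
  eta * alpha * s < (1 - eps) * (1 - 2 * alpha * s).
Proof.
move=> alpha_gt0 s_gt0 eps_lt1; have eps'_gt0 : 0 < 1 - eps by rewrite subr_gt0.
have k_gt0 : 0 < alpha * s * (1 - eps) by rewrite !mulr_gt0.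
rewrite -(ltr_pM2r k_gt0).
have [a0 s0 e0] : [/\ alpha != 0, s != 0 & 1 - eps != 0] by rewrite !gt_eqF.
have -> : eta / (1 - eps) * (alpha * s * (1 - eps)) = eta * alpha * s by field.
have -> // : ((alpha * s)^-1 - 2) * (alpha * s * (1 - eps)) =
    (1 - eps) * (1 - 2 * alpha * s) by field; rewrite a0 s0.
Qed.

(* Numerical bookkeeping of the proof: with N = ||f0||_1, c = <f0,f>,
   a = ||f'||_1, T = |t|, n = ||f||_2 and L = ||f' + t f0||_1, the three
   estimates and the rescaled hypothesis (iv) give N / c < L. *)
Lemma cost_gap (R : realFieldType) (N c a T n L s alpha eps eta : R) :
  0 < c -> 0 < a -> 0 <= N -> 0 <= eta -> 0 < alpha -> eps < 1 ->
  T * N + (1 - 2 * alpha * s) * a <= L ->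
  1 - eta * alpha * a * n <= c * T ->
  (1 - eps) * n * N <= c * s ->
  eta * alpha * s < (1 - eps) * (1 - 2 * alpha * s) ->
  N / c < L.
Proof.
move=> c_gt0 a_gt0 N_ge0 eta_ge0 alpha_gt0 eps_lt1 cost T_large N_small margin.
have eps'_gt0 : 0 < 1 - eps by rewrite subr_gt0.
rewrite ltr_pdivrMr // mulrC; apply: lt_le_trans (ler_wpM2l (ltW c_gt0) cost).
have gain : eta * alpha * a * n * N < c * (1 - 2 * alpha * s) * a.
  rewrite -subr_gt0 -(pmulr_rgt0 _ eps'_gt0).
  have eta_alpha_a_ge0 : 0 <= eta * alpha * a.
    by rewrite !mulr_ge0 // ltW.
  have := ler_wpM2l eta_alpha_a_ge0 N_small.
  have := margin; rewrite -(ltr_pM2r (mulr_gt0 c_gt0 a_gt0)).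
  lra.
have := ler_wpM2r N_ge0 T_large; lra.
Qed.

Theorem theorem5p3 (R : rcfType) (U : finType) (n : nat) (hn : #|U| = n)
    (V' : {vspace fspace U R}) (f0 f : fspace U R) (mu alpha eps eta : R)
    (hf0 : f0 != 0) (hmu : 0 < mu) (hS : (#|supp f0|%:R : R) <= mu * n%:R)
    (hf : f != 0) (halpha : 0 < alpha) (heps0 : 0 <= eps) (heps1 : eps < 1)
    (heta : 0 <= eta)
    (hi : forall f', f' \in V' -> norm2 f' <= alpha * norm1 f')
    (hii : inner f0 f >= (1 - eps) * norm2 f0 * norm2 f)
    (hiii : forall f', f' \in V' -> inner f' f <= eta * norm2 f' * norm2 f)
    (hiv : eta / (1 - eps) < (alpha * Num.sqrt mu)^-1 - 2) :
  unique_LP_optimum (V' + <[f0]>)%VS f ((inner f0 f)^-1 *: f0).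
Proof.
rewrite -hn in hS; set c := inner f0 f in hii *; set s := Num.sqrt mu in hiv.
have s_gt0 : 0 < s by rewrite sqrtr_gt0.
have eps'_gt0 : 0 < 1 - eps by rewrite subr_gt0.
have f_gt0 := norm2_gt0 hf.
have c_gt0 : 0 < c by apply: lt_le_trans hii; rewrite !mulr_gt0 ?norm2_gt0.
split; first by rewrite -[_ *: f0]add0r memv_add ?mem0v ?memvZ ?memv_line.
  by rewrite innerZl mulVf ?gt_eqF.
move=> _ /memv_addP [f' f'V' [_ /vlineP [t ->] ->]] y_feasible y_neq_y0.
rewrite innerDl innerZl -/c in y_feasible.
(* f' = 0 would force y = y0 *)
have f'_neq0 : f' != 0.
  apply: contraNneq y_neq_y0 => f'0; move: y_feasible.
  by rewrite f'0 inner0l !add0r => /mulr1_eq <-; rewrite invrK.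
set a := norm1 f'; have l2_f' : norm2 f' <= alpha * a := hi f' f'V'.
have cost : `|t| * norm1 f0 + (1 - 2 * alpha * s) * a <= norm1 (f' + t *: f0).
  apply: le_trans (norm1_perturb f' f0 t); rewrite -/a.
  have := ler_wpM2l (ltW s_gt0) l2_f'.
  have := norm1_on_le f' (ltW hmu) hS; rewrite -/s; nra.
have t_large : 1 - eta * alpha * a * norm2 f <= c * `|t|.
  have := hiii f' f'V'; have := ler_wpM2l (mulr_ge0 heta (ltW f_gt0)) l2_f'.
  have : c * t <= c * `|t| by rewrite ler_pM2l // real_ler_norm ?num_real.
  lra.
have f0_small : (1 - eps) * norm2 f * norm1 f0 <= c * s.
  rewrite norm1_on_supp; have := norm1_on_le f0 (ltW hmu) hS; rewrite -/s.
  move/(ler_wpM2l (mulr_ge0 (ltW eps'_gt0) (ltW f_gt0))).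
  have := ler_wpM2r (ltW s_gt0) hii; nra.
rewrite norm1Z gtr0_norm ?invr_gt0 // mulrC.
apply: (cost_gap c_gt0 (norm1_gt0 f'_neq0) (norm1_ge0 f0) heta halpha heps1
  cost t_large f0_small).
exact: condition_iv_rescaled.
Qed.
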